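(* Let $X$ be a metrizable space, $G$ a group and $\varphi\colon G\times X\to X$ an action which is metric-independent expansive (MIE). If $Y\subseteq X$ is a closed subset which is invariant ($g\cdot y\in Y$ for all $g\in G$, $y\in Y$), then the restricted action of $G$ on $Y$ (with the subspace topology) is MIE.
   Context: We write $g\cdot x=\varphi(g,x)$. If $d$ is a metric on $X$, the action is expansive with respect to $d$ if there is $c>0$ such that for all $x\neq y$ in $X$ there is $g\in G$ with $d(g\cdot x,g\cdot y)>c$. The action is metric-independent expansive (MIE) if it is expansive with respect to every metric compatible with the topology of $X$. *)

From HB Require Import structures.
From mathcomp Require Import all_boot all_classical topology.
From Stdlib Require Import Reals.

Set Implicit Arguments. Unset Strict Implicit. Unset Printing Implicit Defensive.

Local Open Scope classical_set_scope.
Local Open Scope R_scope.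

Definition is_group (G : Type) (mul : G -> G -> G) (one : G) (inv : G -> G) : Prop :=
  (forall a b c, mul a (mul b c) = mul (mul a b) c) /\
  (forall a, mul one a = a) /\ (forall a, mul a one = a) /\
  (forall a, mul (inv a) a = one) /\ (forall a, mul a (inv a) = one).

Definition is_action (G T : Type) (mul : G -> G -> G) (one : G)
  (phi : G -> T -> T) : Prop :=
  (forall x, phi one x = x) /\
  (forall g h x, phi (mul g h) x = phi g (phi h x)).

Definition is_metric (T : Type) (d : T -> T -> R) : Prop :=
  (forall x y, 0 <= d x y) /\
  (forall x y, d x y = 0 <-> x = y) /\
  (forall x y, d x y = d y x) /\
  (forall x y z, d x z <= d x y + d y z).

Definition compatible_metric (T : Type) (op : set T -> Prop) (d : T -> T -> R) : Prop :=
  is_metric d /\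
  forall A : set T,
    op A <-> (forall x, A x -> exists e, 0 < e /\ forall y, d x y < e -> A y).

Definition metrizable (T : Type) (op : set T -> Prop) : Prop :=
  exists d : T -> T -> R, compatible_metric op d.

Definition expansive (G T : Type) (phi : G -> T -> T) (d : T -> T -> R) : Prop :=
  exists c, 0 < c /\
    forall x y, x <> y -> exists g, d (phi g x) (phi g y) > c.

Definition MIE (G T : Type) (op : set T -> Prop) (phi : G -> T -> T) : Prop :=
  forall d : T -> T -> R, compatible_metric op d -> expansive phi d.

Definition subspace_open (X : topologicalType) (Y : set X)
  (B : set {x : X | Y x}) : Prop :=
  exists U : set X, open U /\ B = (fun y => U (proj1_sig y)).

Definition action_invariant (G X : Type) (phi : G -> X -> X) (Y : set X) : Prop :=
  forall g y, Y y -> Y (phi g y).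

Definition restrict_action (G X : Type) (phi : G -> X -> X) (Y : set X)
  (HY : action_invariant phi Y) (g : G) (y : {x : X | Y x}) : {x : X | Y x} :=
  exist _ (phi g (proj1_sig y)) (HY g (proj1_sig y) (proj2_sig y)).

(* A compatible metric d on the closed set Y extends to a compatible metric D on X
   with D <= d on Y; since restricted orbits stay in Y, an expansivity constant of the
   action for D is then one for d.  The extension is Hausdorff's: every profile
   f_z = 1 + min(1, d(z, .)) on Y is extended to X by
   F_z(x) = inf_a f_z(a) rho(x, a) / rho(x, Y), and
   D(x, y) = min(rho(x, y), rho(x, Y) + rho(y, Y)) + sup_z |F_z(x) - F_z(y)|.
   The first summand vanishes on Y and controls rho off Y, the second induces the
   topology of Y, and the F_z are equicontinuous, so D induces the topology of X. *)

From mathcomp Require Import all_boot all_classical topology.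
From Stdlib Require Import Reals Lra ClassicalEpsilon ProofIrrelevance.
Local Open Scope R_scope.

Definition Sup (S : R -> Prop) : R := epsilon (inhabits 0) (is_lub S).

Lemma Sup_lub (S : R -> Prop) r0 b :
  S r0 -> (forall r, S r -> r <= b) -> is_lub S (Sup S).
Proof.
intros Sr0 Sb. unfold Sup. apply epsilon_spec.
destruct (completeness S) as [m Hm]; [exists b; exact Sb | exists r0; exact Sr0 |].
exists m; exact Hm.
Qed.

Definition Inf (S : R -> Prop) : R := - Sup (fun r => S (- r)).

Lemma Inf_glb (S : R -> Prop) r0 b : S r0 -> (forall r, S r -> b <= r) ->
  (forall r, S r -> Inf S <= r) /\ (forall z, (forall r, S r -> z <= r) -> z <= Inf S).
Proof.
intros Sr0 Sb.
destruct (Sup_lub (fun r => S (- r)) (- r0) (- b)) as [Hub Hleast].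
- now rewrite Ropp_involutive.
- intros r Sr. specialize (Sb _ Sr). lra.
- unfold Inf. split.
  + intros r Sr. enough (- r <= Sup (fun r => S (- r))) by lra.
    apply Hub. now rewrite Ropp_involutive.
  + intros z Hz. enough (Sup (fun r => S (- r)) <= - z) by lra.
    apply Hleast. intros r Sr. specialize (Hz _ Sr). lra.
Qed.

Lemma Inf_lt (S : R -> Prop) r0 b t : S r0 -> (forall r, S r -> b <= r) ->
  Inf S < t -> exists r, S r /\ r < t.
Proof.
intros Sr0 Sb Ht. apply NNPP. intros Hnone.
enough (t <= Inf S) by lra.
apply (Inf_glb S r0 b Sr0 Sb). intros r Sr.
apply Rnot_lt_le. intros Hr. apply Hnone. now exists r.
Qed.

Lemma Rle_div_l a b c : 0 < c -> a / c <= b <-> a <= b * c.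
Proof.
intros Hc. split; intros H.
- replace a with (a / c * c) by (field; lra). now apply Rmult_le_compat_r; lra.
- apply (Rmult_le_reg_r c); [exact Hc|]. replace (a / c * c) with a by (field; lra). exact H.
Qed.

Lemma Rle_div_r a b c : 0 < c -> b <= a / c <-> b * c <= a.
Proof.
intros Hc. split; intros H.
- replace a with (a / c * c) by (field; lra). now apply Rmult_le_compat_r; lra.
- apply (Rmult_le_reg_r c); [exact Hc|]. replace (a / c * c) with a by (field; lra). exact H.
Qed.

Lemma Rlt_div_l a b c : 0 < c -> a / c < b <-> a < b * c.
Proof.
intros Hc. split; intros H.
- replace a with (a / c * c) by (field; lra). now apply Rmult_lt_compat_r.
- apply (Rmult_lt_reg_r c); [exact Hc|]. replace (a / c * c) with a by (field; lra). exact H.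
Qed.

Lemma pos_min3 a b c : 0 < a -> 0 < b -> 0 < c ->
  exists r, 0 < r /\ r <= a /\ r <= b /\ r <= c.
Proof.
intros Ha Hb Hc. exists (Rmin a (Rmin b c)).
pose proof (Rmin_l a (Rmin b c)). pose proof (Rmin_r a (Rmin b c)).
pose proof (Rmin_l b c). pose proof (Rmin_r b c).
split; [repeat apply Rmin_pos|]; lra.
Qed.

Lemma ratio_shift_bound p p' s s' t : 0 < s -> s <= p -> p' <= p + t -> s - t <= s' ->
  0 <= t -> 2 * t <= s -> p' / s' <= p / s * (1 + 4 * t / s).
Proof.
intros Hs Hp Hp' Hs' Ht Hts.
replace (p / s * (1 + 4 * t / s)) with (p * (s + 4 * t) / (s * s)) by (field; lra).
apply Rle_div_l; [lra|]. apply Rle_trans with (p + t); [exact Hp'|].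
apply Rle_trans with (p * (s + 4 * t) * (s - t) / (s * s)).
- apply Rle_div_r; [nra|].
  assert (s * s <= p * (3 * s - 4 * t)) by nra. nra.
- replace (p * (s + 4 * t) * (s - t) / (s * s)) with (p * (s + 4 * t) / (s * s) * (s - t))
    by (field; lra).
  apply Rmult_le_compat_l; [|lra].
  apply Rle_div_r; [nra|]. rewrite Rmult_0_l. apply Rmult_le_pos; lra.
Qed.

Definition is_pseudometric {T : Type} (d : T -> T -> R) : Prop :=
  (forall x y, 0 <= d x y) /\ (forall x, d x x = 0) /\
  (forall x y, d x y = d y x) /\ (forall x y z, d x z <= d x y + d y z).

Lemma pseudometric_add {T : Type} (d1 d2 : T -> T -> R) :
  is_pseudometric d1 -> is_pseudometric d2 -> is_pseudometric (fun x y => d1 x y + d2 x y).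
Proof.
intros [P0 [P1 [P2 P3]]] [Q0 [Q1 [Q2 Q3]]]. split; [|split; [|split]].
- intros x y. specialize (P0 x y). specialize (Q0 x y). lra.
- intros x. rewrite P1 Q1. lra.
- intros x y. now rewrite P2 Q2.
- intros x y z. specialize (P3 x y z). specialize (Q3 x y z). lra.
Qed.

Lemma pseudometric_metric {T : Type} (d : T -> T -> R) :
  is_pseudometric d -> (forall x y, d x y = 0 -> x = y) -> is_metric d.
Proof.
intros [P0 [P1 [P2 P3]]] Psep. split; [exact P0|split; [|split; [exact P2|exact P3]]].
intros x y. split; [apply Psep | intros ->; apply P1].
Qed.

Lemma metric_self {T : Type} {d : T -> T -> R} (x : T) : is_metric d -> d x x = 0.
Proof. intros Hd. now apply (proj1 (proj2 Hd)). Qed.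

Lemma metric_ball_open {T : Type} {op : set T -> Prop} {d : T -> T -> R} (x : T) r :
  compatible_metric op d -> op (fun y => d x y < r).
Proof.
intros [[_ [_ [_ Htri]]] Hopen]. apply Hopen.
intros y Hy. exists (r - d x y). split; [lra|].
intros z Hz. pose proof (Htri x y z). lra.
Qed.

Definition sup_dist {I T : Type} (F : I -> T -> R) x y :=
  Sup (fun r => exists i, r = Rabs (F i x - F i y)).

Section SupDistance.
Context {I T : Type} (F : I -> T -> R) (i0 : I) {lo hi : R}.
Hypothesis F_bounded : forall i x, lo <= F i x <= hi.

Lemma sup_dist_lub x y : is_lub (fun r => exists i, r = Rabs (F i x - F i y)) (sup_dist F x y).
Proof.
apply (Sup_lub _ (Rabs (F i0 x - F i0 y)) (hi - lo)); [now exists i0|].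
intros r [i ->]. pose proof (F_bounded i x). pose proof (F_bounded i y).
apply Rabs_le. lra.
Qed.

Lemma sup_dist_ge x y i : Rabs (F i x - F i y) <= sup_dist F x y.
Proof. apply (proj1 (sup_dist_lub x y)). now exists i. Qed.

Lemma sup_dist_le x y w : (forall i, Rabs (F i x - F i y) <= w) -> sup_dist F x y <= w.
Proof. intros Hw. apply (proj2 (sup_dist_lub x y)). now intros r [i ->]. Qed.

Lemma sup_dist_pseudometric : is_pseudometric (sup_dist F).
Proof.
split; [|split; [|split]].
- intros x y. apply Rle_trans with (2 := sup_dist_ge x y i0). apply Rabs_pos.
- intros x. apply Rle_antisym; [|apply Rle_trans with (2 := sup_dist_ge x x i0); apply Rabs_pos].
  apply sup_dist_le. intros i. rewrite Rminus_diag Rabs_R0. lra.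
- intros x y. apply Rle_antisym; apply sup_dist_le; intros i;
    rewrite Rabs_minus_sym; apply sup_dist_ge.
- intros x y z. apply sup_dist_le. intros i.
  replace (F i x - F i z) with ((F i x - F i y) + (F i y - F i z)) by ring.
  eapply Rle_trans; [apply Rabs_triang|].
  apply Rplus_le_compat; apply sup_dist_ge.
Qed.

End SupDistance.

Definition dist_set {T : Type} (Y : set T) (rho : T -> T -> R) x :=
  Inf (fun r => exists a : {x : T | Y x}, r = rho x (proj1_sig a)).

Definition dist_ratio {T : Type} (Y : set T) (rho : T -> T -> R) x (a : {x : T | Y x}) :=
  rho x (proj1_sig a) / dist_set Y rho x.

Definition gap_dist {T : Type} (Y : set T) (rho : T -> T -> R) x y :=
  Rmin (rho x y) (dist_set Y rho x + dist_set Y rho y).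

Section SetDistance.
Context {T : Type} {Y : set T} {rho : T -> T -> R} (a0 : {x : T | Y x}).
Hypothesis rho_metric : is_metric rho.

Local Notation dist_set := (dist_set Y rho).
Local Notation dist_ratio := (dist_ratio Y rho).
Local Notation gap_dist := (gap_dist Y rho).

Lemma dist_set_glb x :
  (forall a : {x : T | Y x}, dist_set x <= rho x (proj1_sig a)) /\
  (forall w, (forall a : {x : T | Y x}, w <= rho x (proj1_sig a)) -> w <= dist_set x).
Proof.
destruct (Inf_glb (fun r => exists a : {x : T | Y x}, r = rho x (proj1_sig a))
  (rho x (proj1_sig a0)) 0) as [Hlow Hgreat].
- now exists a0.
- intros r [a ->]. apply rho_metric.
- split; [intros a; apply Hlow; now exists a|].
  intros w Hw. apply Hgreat. now intros r [a ->].
Qed.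

Lemma dist_set_le x (a : {x : T | Y x}) : dist_set x <= rho x (proj1_sig a).
Proof. apply dist_set_glb. Qed.

Lemma dist_set_ge0 x : 0 <= dist_set x.
Proof. apply dist_set_glb. intros a. apply rho_metric. Qed.

Lemma dist_set_lt x t : dist_set x < t -> exists a : {x : T | Y x}, rho x (proj1_sig a) < t.
Proof.
intros Ht.
destruct (Inf_lt (fun r => exists a : {x : T | Y x}, r = rho x (proj1_sig a))
  (rho x (proj1_sig a0)) 0 t) as [r [[a ->] Hr]]; [now exists a0 | | exact Ht | now exists a].
intros r [a ->]. apply rho_metric.
Qed.

Lemma dist_set_mem (a : {x : T | Y x}) : dist_set (proj1_sig a) = 0.
Proof.
apply Rle_antisym; [|apply dist_set_ge0].
rewrite <- (metric_self (proj1_sig a) rho_metric). apply dist_set_le.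
Qed.

Lemma dist_set_lipschitz x y : dist_set x <= rho x y + dist_set y.
Proof.
enough (dist_set x - rho x y <= dist_set y) by lra.
apply dist_set_glb. intros a.
pose proof (dist_set_le x a). pose proof (proj2 (proj2 (proj2 rho_metric)) x y (proj1_sig a)).
lra.
Qed.

Lemma dist_ratio_ge1 x (a : {x : T | Y x}) : 0 < dist_set x -> 1 <= dist_ratio x a.
Proof.
intros Hx. unfold dist_ratio. apply Rle_div_r; [exact Hx|].
rewrite Rmult_1_l. apply dist_set_le.
Qed.

Lemma dist_ratio_lt x t : 0 < dist_set x -> 1 < t -> exists a, dist_ratio x a < t.
Proof.
intros Hx Ht. destruct (dist_set_lt x (t * dist_set x)) as [a Ha]; [nra|].
exists a. now apply Rlt_div_l.
Qed.

(* Numerator and denominator both move by at most [rho x1 x2], [dist_set] being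
   1-Lipschitz. *)
Lemma dist_ratio_shift x1 x2 (a : {x : T | Y x}) : 0 < dist_set x1 ->
  2 * rho x1 x2 <= dist_set x1 ->
  dist_ratio x2 a <= dist_ratio x1 a * (1 + 4 * rho x1 x2 / dist_set x1).
Proof.
intros Hpos Hnear. destruct rho_metric as [Hge0 [_ [Hsym Htri]]].
apply ratio_shift_bound; try easy.
- apply dist_set_le.
- pose proof (Htri x2 x1 (proj1_sig a)) as Htr. rewrite (Hsym x2 x1) in Htr. lra.
- pose proof (dist_set_lipschitz x1 x2). lra.
Qed.

Lemma gap_dist_pseudometric : is_pseudometric gap_dist.
Proof.
pose proof dist_set_ge0 as D0. pose proof dist_set_lipschitz as Dl.
destruct rho_metric as [H0 [H1 [Hs Ht]]].
unfold gap_dist. split; [|split; [|split]].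
- intros x y. apply Rmin_glb; [apply H0|]. pose proof (D0 x). pose proof (D0 y). lra.
- intros x. rewrite (proj2 (H1 x x) Logic.eq_refl). apply Rmin_left. pose proof (D0 x). lra.
- intros x y. now rewrite Hs (Rplus_comm (dist_set x)).
- intros x y z. pose proof (Ht x y z). pose proof (Dl x y). pose proof (Dl y x).
  pose proof (Dl z y). pose proof (Dl y z). pose proof (Hs x y). pose proof (Hs y z).
  pose proof (D0 y). unfold Rmin; repeat destruct (Rle_dec _ _); lra.
Qed.

Lemma gap_dist_mem (a b : {x : T | Y x}) : gap_dist (proj1_sig a) (proj1_sig b) = 0.
Proof.
unfold gap_dist. rewrite !dist_set_mem Rplus_0_l. apply Rmin_right. apply rho_metric.
Qed.

End SetDistance.

Definition profile {S : Type} (d : S -> S -> R) z a := 1 + Rmin 1 (d z a).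

Section Profile.
Context {S : Type} {d : S -> S -> R}.
Hypothesis d_metric : is_metric d.

Local Notation profile := (profile d).

Lemma profile_bounds z a : 1 <= profile z a <= 2.
Proof.
unfold profile. pose proof (proj1 d_metric z a). unfold Rmin; destruct (Rle_dec _ _); lra.
Qed.

Lemma profile_le_lipschitz z a b : profile z b <= profile z a + d a b.
Proof.
destruct d_metric as [H0 [_ [_ Ht]]]. unfold profile.
pose proof (Ht z a b). pose proof (H0 a b).
unfold Rmin; destruct (Rle_dec 1 (d z a)), (Rle_dec 1 (d z b)); lra.
Qed.

Lemma profile_lipschitz z a b : Rabs (profile z a - profile z b) <= d a b.
Proof.
pose proof (profile_le_lipschitz z a b). pose proof (profile_le_lipschitz z b a) as Hba.
rewrite (proj1 (proj2 (proj2 d_metric)) b a) in Hba. apply Rabs_le. lra.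
Qed.

Lemma profile_self z : profile z z = 1.
Proof.
unfold profile, Rmin. rewrite (metric_self z d_metric). destruct (Rle_dec _ _); lra.
Qed.

Lemma profile_lt_small z a e : e <= 1 -> profile z a < 1 + e -> d z a < e.
Proof. unfold profile, Rmin. destruct (Rle_dec _ _); lra. Qed.

End Profile.

Definition hausdorff_ext {X : Type} (Y : set X) (rho : X -> X -> R)
  (d : {x : X | Y x} -> {x : X | Y x} -> R) (z : {x : X | Y x}) (x : X) : R :=
  match excluded_middle_informative (Y x) with
  | left Hx => profile d z (exist _ x Hx)
  | right _ => Inf (fun r => exists a, r = profile d z a * dist_ratio Y rho x a)
  end.

Definition ext_metric {X : Type} (Y : set X) (rho : X -> X -> R)
  (d : {x : X | Y x} -> {x : X | Y x} -> R) (x y : X) : R :=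
  gap_dist Y rho x y + sup_dist (hausdorff_ext Y rho d) x y.

Section HausdorffExtension.
Context {X : topologicalType} {Y : set X} {rho : X -> X -> R}
  {d : {x : X | Y x} -> {x : X | Y x} -> R} (a0 : {x : X | Y x}).
Hypotheses (rho_compat : compatible_metric open rho) (Y_closed : closed Y)
  (d_compat : compatible_metric (@subspace_open X Y) d).

Let rho_metric : is_metric rho := proj1 rho_compat.
Let d_metric : is_metric d := proj1 d_compat.

Local Notation dist_set := (dist_set Y rho).
Local Notation dist_ratio := (dist_ratio Y rho).
Local Notation ext := (hausdorff_ext Y rho d).

Lemma dist_set_pos x : ~ Y x -> 0 < dist_set x.
Proof.
intros Hx. assert (Hopen : open (setC Y)) by now rewrite openC.
destruct (proj1 (proj2 rho_compat _) Hopen x Hx) as [e [He Hball]].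
enough (e <= dist_set x) by lra.
apply (dist_set_glb a0 rho_metric). intros a.
apply Rnot_lt_le. intros Ha. exact (Hball _ Ha (proj2_sig a)).
Qed.

Lemma ext_mem z (a : {x : X | Y x}) : ext z (proj1_sig a) = profile d z a.
Proof.
unfold hausdorff_ext. destruct (excluded_middle_informative _) as [Ha|Ha].
- destruct a as [x Hx]. simpl in *. now rewrite (proof_irrelevance _ Ha Hx).
- now destruct (Ha (proj2_sig a)).
Qed.

Lemma ext_out_glb z x : ~ Y x ->
  (forall a, ext z x <= profile d z a * dist_ratio x a) /\
  (forall w, (forall a, w <= profile d z a * dist_ratio x a) -> w <= ext z x).
Proof.
intros Hx. unfold hausdorff_ext.
destruct (excluded_middle_informative (Y x)) as [Hy|_]; [contradiction|].
destruct (Inf_glb (fun r => exists a, r = profile d z a * dist_ratio x a)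
  (profile d z a0 * dist_ratio x a0) 1) as [Hlow Hgreat].
- now exists a0.
- intros r [a ->]. pose proof (profile_bounds d_metric z a).
  pose proof (dist_ratio_ge1 a0 rho_metric x a (dist_set_pos x Hx)). nra.
- split; [intros a; apply Hlow; now exists a|].
  intros w Hw. apply Hgreat. now intros r [a ->].
Qed.

Lemma ext_out_lt z x t : ~ Y x -> ext z x < t ->
  exists a, profile d z a * dist_ratio x a < t.
Proof.
intros Hx Ht. apply NNPP. intros Hnone.
enough (t <= ext z x) by lra.
apply (ext_out_glb z x Hx). intros a.
apply Rnot_lt_le. intros Ha. apply Hnone. now exists a.
Qed.

Lemma ext_bounds z x : 1 <= ext z x <= 4.
Proof.
destruct (excluded_middle_informative (Y x)) as [Hx|Hx].
- change x with (proj1_sig (exist Y x Hx)). rewrite ext_mem.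
  pose proof (profile_bounds d_metric z (exist Y x Hx)). lra.
- pose proof (dist_set_pos x Hx) as Hpos. destruct (ext_out_glb z x Hx) as [Hle Hge]. split.
  + apply Hge. intros a. pose proof (profile_bounds d_metric z a).
    pose proof (dist_ratio_ge1 a0 rho_metric x a Hpos). nra.
  + destruct (dist_ratio_lt a0 rho_metric x 2 Hpos) as [a Ha]; [lra|].
    pose proof (Hle a). pose proof (profile_bounds d_metric z a).
    pose proof (dist_ratio_ge1 a0 rho_metric x a Hpos). nra.
Qed.

Lemma ext_out_stable z x1 x2 : ~ Y x1 -> ~ Y x2 -> 2 * rho x1 x2 <= dist_set x1 ->
  ext z x2 <= ext z x1 * (1 + 4 * rho x1 x2 / dist_set x1).
Proof.
intros Hx1 Hx2 Hnear. pose proof (dist_set_pos x1 Hx1) as Hpos.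
set k := 1 + 4 * rho x1 x2 / dist_set x1.
assert (Hk : 1 <= k).
{ enough (0 <= 4 * rho x1 x2 / dist_set x1) by (unfold k; lra).
  apply Rle_div_r; [exact Hpos|]. rewrite Rmult_0_l. pose proof (proj1 rho_metric x1 x2). lra. }
apply Rle_div_l; [lra|]. apply (ext_out_glb z x1 Hx1). intros a.
apply Rle_div_l; [lra|]. apply Rle_trans with (1 := proj1 (ext_out_glb z x2 Hx2) a).
rewrite Rmult_assoc. apply Rmult_le_compat_l; [pose proof (profile_bounds d_metric z a); lra|].
now apply (dist_ratio_shift a0 rho_metric).
Qed.

Lemma ext_out_near z x1 x2 : ~ Y x1 -> ~ Y x2 -> 2 * rho x1 x2 <= dist_set x1 ->
  ext z x2 - ext z x1 <= 16 * (rho x1 x2 / dist_set x1).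
Proof.
intros Hx1 Hx2 Hnear. pose proof (ext_out_stable z x1 x2 Hx1 Hx2 Hnear) as Hst.
pose proof (ext_bounds z x1).
assert (0 <= rho x1 x2 / dist_set x1).
{ apply Rle_div_r; [now apply dist_set_pos|]. rewrite Rmult_0_l. apply rho_metric. }
replace (4 * rho x1 x2 / dist_set x1) with (4 * (rho x1 x2 / dist_set x1)) in Hst
  by (unfold Rdiv; ring).
nra.
Qed.

Lemma d_near_of_rho_near (a : {x : X | Y x}) e : 0 < e ->
  exists r, 0 < r /\ forall b, rho (proj1_sig a) (proj1_sig b) < r -> d a b < e.
Proof.
intros He. destruct (metric_ball_open a e d_compat) as [U [HU HUe]].
assert (HUb : forall b, d a b < e = U (proj1_sig b)) by exact (fun b => f_equal (fun f => f b) HUe).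
assert (Ua : U (proj1_sig a)) by (rewrite <- HUb, (metric_self a d_metric); exact He).
destruct (proj1 (proj2 rho_compat U) HU _ Ua) as [r [Hr Hball]].
exists r. split; [exact Hr|]. intros b Hb. rewrite HUb. now apply Hball.
Qed.

Lemma rho_near_of_d_near (a : {x : X | Y x}) e : 0 < e ->
  exists r, 0 < r /\ forall b, d a b < r -> rho (proj1_sig a) (proj1_sig b) < e.
Proof.
intros He.
assert (HB : subspace_open (fun b : {x : X | Y x} => rho (proj1_sig a) (proj1_sig b) < e)).
{ exists (fun y => rho (proj1_sig a) y < e). split; [|reflexivity].
  exact (metric_ball_open _ e rho_compat). }
apply (proj1 (proj2 d_compat _) HB a). now rewrite (metric_self _ rho_metric).
Qed.

Lemma ext_equicont_mem (a : {x : X | Y x}) eps : 0 < eps ->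
  exists r, 0 < r /\ forall x z, rho (proj1_sig a) x < r ->
    Rabs (ext z (proj1_sig a) - ext z x) <= eps.
Proof.
intros Heps. destruct rho_metric as [Hge0 [_ [Hsym Htri]]].
destruct (d_near_of_rho_near a (eps / 4)) as [r1 [Hr1 Hclose]]; [lra|].
set th := Rmin 1 (eps / 16).
assert (Hth : 0 < th <= 1 /\ th <= eps / 16).
{ split; [split; [apply Rmin_pos|apply Rmin_l]; lra | apply Rmin_r]. }
exists (r1 / 3). split; [lra|]. intros x z Hx.
rewrite ext_mem. pose proof (profile_bounds d_metric z a).
destruct (excluded_middle_informative (Y x)) as [Hy|Hy].
- change x with (proj1_sig (exist Y x Hy)). rewrite ext_mem.
  eapply Rle_trans; [exact (profile_lipschitz d_metric z a _)|].
  apply Rlt_le, Rlt_le_trans with (eps / 4); [apply Hclose; simpl; lra|lra].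
- pose proof (dist_set_pos x Hy) as Hpos. destruct (ext_out_glb z x Hy) as [Hle Hge].
  assert (Hdx : dist_set x <= rho (proj1_sig a) x) by (rewrite Hsym; apply (dist_set_le a0 rho_metric)).
  (* Upper bound: a point [b] realizing [dist_set x] up to the factor [1 + th] is close to [a]. *)
  assert (Hup : ext z x <= profile d z a + 3 * eps / 4).
  { destruct (dist_ratio_lt a0 rho_metric x (1 + th) Hpos) as [b Hb]; [lra|].
    pose proof (proj1 (Rlt_div_l _ _ _ Hpos) Hb).
    assert (Hab : d a b < eps / 4) by (apply Hclose; pose proof (Htri (proj1_sig a) x (proj1_sig b)); nra).
    pose proof (profile_le_lipschitz d_metric z a b). pose proof (profile_bounds d_metric z b).
    pose proof (Hle b). nra. }
  (* Lower bound: points of [Y] far from [a] have ratio at least 2. *)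
  assert (Hlow : profile d z a - eps / 4 <= ext z x).
  { apply Hge. intros b. pose proof (profile_bounds d_metric z b).
    pose proof (dist_ratio_ge1 a0 rho_metric x b Hpos).
    destruct (Rlt_le_dec (rho (proj1_sig a) (proj1_sig b)) r1) as [Hb|Hb].
    - pose proof (Hclose b Hb). pose proof (profile_le_lipschitz d_metric z b a) as Hba.
      rewrite (proj1 (proj2 (proj2 d_metric)) b a) in Hba. nra.
    - assert (2 <= dist_ratio x b).
      { apply Rle_div_r; [exact Hpos|]. pose proof (Htri (proj1_sig a) x (proj1_sig b)). lra. }
      nra. }
  apply Rabs_le. lra.
Qed.

Lemma ext_equicont_out x eps : ~ Y x -> 0 < eps ->
  exists r, 0 < r /\ forall x' z, rho x x' < r -> Rabs (ext z x - ext z x') <= eps.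
Proof.
intros Hx Heps. pose proof (dist_set_pos x Hx) as Hpos.
exists (Rmin (dist_set x / 4) (eps * dist_set x / 64)).
split; [apply Rmin_pos; nra|]. intros x' z Hx'.
pose proof (Rmin_l (dist_set x / 4) (eps * dist_set x / 64)).
pose proof (Rmin_r (dist_set x / 4) (eps * dist_set x / 64)).
assert (Hx'out : ~ Y x').
{ intros Hy. pose proof (dist_set_le a0 rho_metric x (exist Y x' Hy)). simpl in *. lra. }
pose proof (proj1 rho_metric x x').
assert (Hpos' : 3 * dist_set x / 4 <= dist_set x').
{ pose proof (dist_set_lipschitz a0 rho_metric x x'). lra. }
assert (Hr : rho x x' / dist_set x < eps / 64) by (apply Rlt_div_l; lra).
assert (Hr' : rho x' x / dist_set x' < eps / 32).
{ rewrite (proj1 (proj2 (proj2 rho_metric)) x' x). apply Rlt_div_l; nra. }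
pose proof (ext_out_near z x x' Hx Hx'out ltac:(lra)).
pose proof (ext_out_near z x' x Hx'out Hx ltac:(rewrite (proj1 (proj2 (proj2 rho_metric)) x' x); lra)).
apply Rabs_le. lra.
Qed.

Lemma ext_equicontinuous x eps : 0 < eps ->
  exists r, 0 < r /\ forall x' z, rho x x' < r -> Rabs (ext z x - ext z x') <= eps.
Proof.
intros Heps. destruct (excluded_middle_informative (Y x)) as [Hx|Hx].
- exact (ext_equicont_mem (exist Y x Hx) eps Heps).
- exact (ext_equicont_out x eps Hx Heps).
Qed.

Lemma ext_metric_near x eps : 0 < eps ->
  exists r, 0 < r /\ forall x', rho x x' < r -> ext_metric Y rho d x x' < eps.
Proof.
intros Heps. destruct (ext_equicontinuous x (eps / 2)) as [r [Hr Hequi]]; [lra|].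
exists (Rmin r (eps / 2)). split; [now apply Rmin_pos; lra|]. intros x' Hx'.
pose proof (Rmin_l r (eps / 2)). pose proof (Rmin_r r (eps / 2)).
pose proof (Rmin_l (rho x x') (dist_set x + dist_set x')).
assert (sup_dist ext x x' <= eps / 2).
{ apply (sup_dist_le _ a0 ext_bounds). intros z. apply Hequi. lra. }
unfold ext_metric, gap_dist. lra.
Qed.

Lemma ext_metric_pseudometric : is_pseudometric (ext_metric Y rho d).
Proof.
apply pseudometric_add; [exact (gap_dist_pseudometric a0 rho_metric)|].
exact (sup_dist_pseudometric _ a0 ext_bounds).
Qed.

Lemma gap_dist_le_ext_metric x y : gap_dist Y rho x y <= ext_metric Y rho d x y.
Proof.
pose proof (proj1 (sup_dist_pseudometric _ a0 ext_bounds) x y). unfold ext_metric. lra.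
Qed.

Lemma ext_diff_le_ext_metric z x y : Rabs (ext z x - ext z y) <= ext_metric Y rho d x y.
Proof.
pose proof (proj1 (gap_dist_pseudometric a0 rho_metric) x y).
pose proof (sup_dist_ge _ a0 ext_bounds x y z). unfold ext_metric. lra.
Qed.

Lemma rho_near_of_ext_metric_mem (a : {x : X | Y x}) eps : 0 < eps ->
  exists r, 0 < r /\ forall x, ext_metric Y rho d (proj1_sig a) x < r -> rho (proj1_sig a) x < eps.
Proof.
intros Heps. destruct rho_metric as [Hge0 [_ [Hsym Htri]]].
destruct (rho_near_of_d_near a (eps / 2)) as [e1 [He1 Hclose]]; [lra|].
destruct (pos_min3 (eps / 4) e1 (1 / 2)) as [r Hr]; [lra|lra|lra|].
exists r. split; [lra|]. intros x Hx.
(* Test with the profile centred at [a], which equals 1 at [a] itself. *)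
pose proof (ext_diff_le_ext_metric a (proj1_sig a) x) as Hdiff.
rewrite ext_mem (profile_self d_metric) in Hdiff.
rewrite Rabs_minus_sym in Hdiff. pose proof (Rle_abs (ext a x - 1)).
assert (Hext : ext a x < 1 + r) by lra.
destruct (excluded_middle_informative (Y x)) as [Hy|Hy].
- change x with (proj1_sig (exist Y x Hy)) in Hext |- *. rewrite ext_mem in Hext.
  apply Rlt_trans with (eps / 2); [|lra]. apply Hclose.
  apply profile_lt_small in Hext; lra.
- destruct (ext_out_lt a x (1 + r) Hy Hext) as [b Hb].
  pose proof (dist_set_pos x Hy) as Hpos.
  pose proof (profile_bounds d_metric a b). pose proof (dist_ratio_ge1 a0 rho_metric x b Hpos).
  assert (Hab : rho (proj1_sig a) (proj1_sig b) < eps / 2).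
  { apply Hclose, Rlt_le_trans with r; [apply profile_lt_small; nra | lra]. }
  assert (Hxb : rho x (proj1_sig b) < 2 * dist_set x) by (apply Rlt_div_l; [exact Hpos|unfold dist_ratio in *; nra]).
  assert (Hgap : gap_dist Y rho (proj1_sig a) x = dist_set x).
  { unfold gap_dist. rewrite (dist_set_mem a0 rho_metric) Rplus_0_l. apply Rmin_right.
    rewrite Hsym. apply (dist_set_le a0 rho_metric). }
  pose proof (gap_dist_le_ext_metric (proj1_sig a) x).
  pose proof (Htri (proj1_sig a) (proj1_sig b) x) as Htr. rewrite (Hsym (proj1_sig b) x) in Htr.
  lra.
Qed.

Lemma rho_near_of_ext_metric_out x eps : ~ Y x -> 0 < eps ->
  exists r, 0 < r /\ forall x', ext_metric Y rho d x x' < r -> rho x x' < eps.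
Proof.
intros Hx Heps. pose proof (dist_set_pos x Hx) as Hpos.
exists (Rmin eps (dist_set x)). split; [now apply Rmin_pos|]. intros x' Hx'.
pose proof (Rmin_l eps (dist_set x)). pose proof (Rmin_r eps (dist_set x)).
pose proof (gap_dist_le_ext_metric x x') as Hgap.
pose proof (dist_set_ge0 a0 rho_metric x').
unfold gap_dist, Rmin at 1 in Hgap. destruct (Rle_dec _ _); lra.
Qed.

Lemma rho_near_of_ext_metric_near x eps : 0 < eps ->
  exists r, 0 < r /\ forall x', ext_metric Y rho d x x' < r -> rho x x' < eps.
Proof.
intros Heps. destruct (excluded_middle_informative (Y x)) as [Hx|Hx].
- exact (rho_near_of_ext_metric_mem (exist Y x Hx) eps Heps).
- exact (rho_near_of_ext_metric_out x eps Hx Heps).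
Qed.

Lemma ext_metric_compatible : compatible_metric open (ext_metric Y rho d).
Proof.
split.
- apply pseudometric_metric; [exact ext_metric_pseudometric|]. intros x y Hxy.
  apply rho_metric. destruct (Rle_lt_or_eq_dec _ _ (proj1 rho_metric x y)) as [Hpos|]; [|easy].
  destruct (rho_near_of_ext_metric_near x _ Hpos) as [r [Hr Hnear]].
  pose proof (Hnear y ltac:(lra)). lra.
- intros A. split.
  + intros HA x Ax. destruct (proj1 (proj2 rho_compat A) HA x Ax) as [e [He Hball]].
    destruct (rho_near_of_ext_metric_near x e He) as [r [Hr Hnear]].
    exists r. split; [exact Hr|]. intros y Hy. now apply Hball, Hnear.
  + intros Hball. apply (proj2 (proj2 rho_compat A)). intros x Ax.
    destruct (Hball x Ax) as [e [He Hb]].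
    destruct (ext_metric_near x e He) as [r [Hr Hnear]].
    exists r. split; [exact Hr|]. intros y Hy. now apply Hb, Hnear.
Qed.

Lemma ext_metric_le (a b : {x : X | Y x}) : ext_metric Y rho d (proj1_sig a) (proj1_sig b) <= d a b.
Proof.
unfold ext_metric. rewrite (gap_dist_mem a0 rho_metric) Rplus_0_l.
apply (sup_dist_le _ a0 ext_bounds). intros z. rewrite !ext_mem.
exact (profile_lipschitz d_metric z a b).
Qed.

End HausdorffExtension.

Lemma compatible_metric_extension {X : topologicalType} {Y : set X}
  {d : {x : X | Y x} -> {x : X | Y x} -> R} :
  metrizable (@open X) -> closed Y -> compatible_metric (@subspace_open X Y) d ->
  exists D, compatible_metric (@open X) D /\
    forall a b : {x : X | Y x}, D (proj1_sig a) (proj1_sig b) <= d a b.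
Proof.
intros [rho Hrho] HY Hd.
destruct (classic (exists a0 : {x : X | Y x}, True)) as [[a0 _]|Hempty].
- exists (ext_metric Y rho d). split.
  + exact (ext_metric_compatible a0 Hrho HY Hd).
  + exact (ext_metric_le a0 Hrho HY Hd).
- exists rho. split; [exact Hrho|]. intros a. exfalso. now apply Hempty; exists a.
Qed.

Lemma expansive_restrict {G X : Type} {phi : G -> X -> X} {Y : set X}
  (HY : action_invariant phi Y) {D : X -> X -> R} {d : {x : X | Y x} -> {x : X | Y x} -> R} :
  (forall a b, D (proj1_sig a) (proj1_sig b) <= d a b) ->
  expansive phi D -> expansive (restrict_action HY) d.
Proof.
intros Hle [c [Hc Hexp]]. exists c. split; [exact Hc|]. intros a b Hab.
destruct (Hexp (proj1_sig a) (proj1_sig b)) as [g Hg].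
- intros E. apply Hab. apply eq_sig_hprop; [intros; apply proof_irrelevance | exact E].
- exists g. pose proof (Hle (restrict_action HY g a) (restrict_action HY g b)). simpl in *. lra.
Qed.

Theorem mainTheorem1 (X : topologicalType) (G : Type)
  (mul : G -> G -> G) (one : G) (inv : G -> G)
  (phi : G -> X -> X) (Y : set X)
  (HG : is_group mul one inv)
  (Hact : is_action mul one phi)
  (Hmetr : metrizable (@open X))
  (HMIE : MIE (@open X) phi)
  (HYcl : closed Y)
  (HYinv : action_invariant phi Y) :
  MIE (@subspace_open X Y) (restrict_action HYinv).
Proof.
intros d Hd.
destruct (compatible_metric_extension Hmetr HYcl Hd) as [D [HD HDle]].
exact (expansive_restrict HYinv HDle (HMIE D HD)).
Qed.
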